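(* Let $D\ge 1$, let $K\ge 0$, let $v\in\mathbb{R}^D$ with $v\neq 0$, and let $\epsilon\in\mathbb{R}^D$. Decompose $\epsilon=\epsilon_\parallel+\epsilon_\perp$, where $\epsilon_\parallel$ is the orthogonal projection of $\epsilon$ onto $\mathrm{span}(v)$ and $\langle \epsilon_\perp, v\rangle=0$. Suppose $\|\epsilon_\perp\|\ge \|v\|$ and $\|\epsilon_\parallel\|\le K\|v\|$. Then $v+\epsilon\neq 0$ and \[ \left\| \frac{v + \epsilon}{\|v + \epsilon\|} - \frac{v}{\|v\|} \right\| \;\geq\; \frac{1}{\sqrt{(1+K)^2+1}} \;>\; 0 . \]
   Context: All norms and inner products are the standard Euclidean ones on $\mathbb{R}^D$. *)

From HB Require Import structures.
From mathcomp Require Import all_boot all_order all_algebra.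
From mathcomp Require Import reals.
Set Implicit Arguments. Unset Strict Implicit. Unset Printing Implicit Defensive.
Import Order.TTheory GRing.Theory Num.Theory.
Local Open Scope ring_scope.

Definition dotv (R : realType) (D : nat) (u w : 'rV[R]_D) : R :=
  \sum_(i < D) u 0 i * w 0 i.

Definition normv (R : realType) (D : nat) (u : 'rV[R]_D) : R :=
  Num.sqrt (dotv u u).

(* Write v + eps = a v + p with a = 1 + c and p = eps_perp orthogonal to v.
   The difference of the unit vectors along a v + p and along v has the
   component p / |a v + p| orthogonal to v, so its norm is at least
   |p| / |a v + p|.  By Pythagoras |a v + p|^2 = a^2 |v|^2 + |p|^2, and
   |a| <= 1 + K together with |v| <= |p| bounds this by ((1 + K)^2 + 1) |p|^2. *)
From HB Require Import structures.
From mathcomp Require Import all_boot all_order all_algebra.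
From mathcomp Require Import reals.
From mathcomp Require Import ring lra.
Set Implicit Arguments. Unset Strict Implicit. Unset Printing Implicit Defensive.
Import Order.TTheory GRing.Theory Num.Theory.
Local Open Scope ring_scope.

Section EuclideanNorm.

Variables (R : realType) (D : nat).
Implicit Types (u w z v p : 'rV[R]_D) (a b : R).

Lemma dotvC u w : dotv u w = dotv w u.
Proof. by apply: eq_bigr => i _; rewrite mulrC. Qed.

Lemma dotvDl u w z : dotv (u + w) z = dotv u z + dotv w z.
Proof. by rewrite /dotv -big_split; apply: eq_bigr => i _; rewrite mxE mulrDl. Qed.

Lemma dotvZl a u z : dotv (a *: u) z = a * dotv u z.
Proof. by rewrite /dotv mulr_sumr; apply: eq_bigr => i _; rewrite mxE mulrA. Qed.

Lemma dotvZr a u z : dotv u (a *: z) = a * dotv u z.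
Proof. by rewrite dotvC dotvZl dotvC. Qed.

Lemma dotvv_ge0 u : 0 <= dotv u u.
Proof. by apply: sumr_ge0 => i _; rewrite -expr2 sqr_ge0. Qed.

Lemma dotvv_eq0 u : (dotv u u == 0) = (u == 0).
Proof.
apply/eqP/eqP => [u0|->]; last by apply: big1 => i _; rewrite mxE mul0r.
apply/rowP => i; rewrite mxE.
have sq_ge0 (j : 'I_D) : true -> 0 <= u 0 j * u 0 j by rewrite -expr2 sqr_ge0.
by have /eqP := @psumr_eq0P _ _ _ _ sq_ge0 u0 i isT; rewrite mulf_eq0 orbb => /eqP.
Qed.

Lemma normv_ge0 u : 0 <= normv u.
Proof. exact: sqrtr_ge0. Qed.

Lemma sqr_normv u : normv u ^+ 2 = dotv u u.
Proof. by rewrite sqr_sqrtr // dotvv_ge0. Qed.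

Lemma normv_gt0 u : (0 < normv u) = (u != 0).
Proof. by rewrite sqrtr_gt0 lt_def dotvv_eq0 dotvv_ge0 andbT. Qed.

Lemma normvZ a u : normv (a *: u) = `|a| * normv u.
Proof. by rewrite /normv dotvZl dotvZr mulrA -expr2 sqrtrM ?sqr_ge0 // sqrtr_sqr. Qed.

Lemma sqr_normvD_orth u w :
  dotv u w = 0 -> normv (u + w) ^+ 2 = normv u ^+ 2 + normv w ^+ 2.
Proof.
move=> uw0; have wu0 : dotv w u = 0 by rewrite dotvC.
rewrite !sqr_normv !dotvDl [dotv u (u + w)]dotvC [dotv w (u + w)]dotvC.
by rewrite !dotvDl uw0 wu0 addr0 add0r.
Qed.

Lemma normv_le_normvD_orth u w : dotv u w = 0 -> normv w <= normv (u + w).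
Proof.
move=> /sqr_normvD_orth uw; rewrite -ler_sqr ?nnegrE ?normv_ge0 //.
by rewrite uw lerDr sqr_ge0.
Qed.

Lemma normv_unit_diff_ge a v p :
  dotv p v = 0 ->
  normv p / normv (a *: v + p) <=
    normv ((normv (a *: v + p))^-1 *: (a *: v + p) - (normv v)^-1 *: v).
Proof.
move=> pv0; set W := normv (a *: v + p).
have -> : W^-1 *: (a *: v + p) - (normv v)^-1 *: v
          = (W^-1 * a - (normv v)^-1) *: v + W^-1 *: p.
  by apply/rowP => i; rewrite !mxE; ring.
have orth : dotv ((W^-1 * a - (normv v)^-1) *: v) (W^-1 *: p) = 0.
  by rewrite dotvZl dotvZr dotvC pv0 !mulr0.
apply: le_trans _ (normv_le_normvD_orth orth).
by rewrite normvZ ger0_norm ?invr_ge0 ?normv_ge0 // mulrC.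
Qed.

Lemma normv_orthD_le a b v p :
  dotv p v = 0 -> `|a| <= b -> normv v <= normv p ->
  normv (a *: v + p) <= Num.sqrt (b ^+ 2 + 1) * normv p.
Proof.
move=> pv0 ab vp.
have ap : dotv (a *: v) p = 0 by rewrite dotvZl dotvC pv0 mulr0.
rewrite -ler_sqr ?nnegrE ?mulr_ge0 ?sqrtr_ge0 ?normv_ge0 //.
have sqrt2 : Num.sqrt (b ^+ 2 + 1) ^+ 2 = b ^+ 2 + 1.
  by rewrite sqr_sqrtr // addr_ge0 ?sqr_ge0.
rewrite sqr_normvD_orth // normvZ !exprMn sqrt2.
have a2b2 : `|a| ^+ 2 <= b ^+ 2.
  by rewrite lerXn2r ?nnegrE ?(le_trans _ ab) ?normr_ge0.
have v2p2 : normv v ^+ 2 <= normv p ^+ 2.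
  by rewrite lerXn2r ?nnegrE ?normv_ge0.
have := ler_pM (sqr_ge0 _) (sqr_ge0 _) a2b2 v2p2; lra.
Qed.

End EuclideanNorm.

Theorem mainTheorem1 (R : realType) (D : nat) (hD : (1 <= D)%N) (K : R)
  (hK : 0 <= K) (v eps eps_par eps_perp : 'rV[R]_D)
  (hv : v != 0)
  (hdec : eps = eps_par + eps_perp)
  (hpar : exists c : R, eps_par = c *: v)
  (hperp : dotv eps_perp v = 0)
  (h1 : normv v <= normv eps_perp)
  (h2 : normv eps_par <= K * normv v) :
  v + eps != 0 /\
  1 / Num.sqrt ((1 + K) ^+ 2 + 1) <=
    normv ((normv (v + eps))^-1 *: (v + eps) - (normv v)^-1 *: v) /\
  0 < 1 / Num.sqrt ((1 + K) ^+ 2 + 1).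
Proof.
case: hpar => c hc; subst eps eps_par; set p := eps_perp in hperp h1 h2 *.
have -> : v + (c *: v + p) = (1 + c) *: v + p by rewrite scalerDl scale1r addrA.
have v_gt0 : 0 < normv v by rewrite normv_gt0.
have p_gt0 : 0 < normv p := lt_le_trans v_gt0 h1.
have S_gt0 : 0 < Num.sqrt ((1 + K) ^+ 2 + 1) by rewrite sqrtr_gt0; nra.
have cK : `|c| <= K by rewrite -(ler_pM2r v_gt0) -normvZ.
have w_ge_p : normv p <= normv ((1 + c) *: v + p).
  by apply: normv_le_normvD_orth; rewrite dotvZl dotvC hperp mulr0.
have w_le : normv ((1 + c) *: v + p) <= Num.sqrt ((1 + K) ^+ 2 + 1) * normv p.
  by apply: normv_orthD_le => //; apply: le_trans (ler_normD _ _) _; rewrite normr1 lerD2l.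
split; first by rewrite -normv_gt0 (lt_le_trans p_gt0).
split; last by rewrite divr_gt0.
apply: le_trans _ (normv_unit_diff_ge _ hperp).
by rewrite ler_pdivlMr ?(lt_le_trans p_gt0) // mul1r ler_pdivrMl.
Qed.
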